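(* Writing $t^{\boldsymbol\mu}_{q,\sigma}$ for $t_\sigma$ computed with the potentials $\boldsymbol\psi_q^{\boldsymbol\mu}$, $$\lim_{q\to+\infty}\frac{-1}{q}\max_{\sigma\in\mathcal A}\sup_{\mathbf P_{\!\sigma}\in\mathcal Q^\sigma}t^{\boldsymbol\mu}_{q,\sigma}(\mathbf P_{\!\sigma})=\min_{\sigma\in\mathcal A}\inf_{\mathbf P_{\!\sigma}\in\mathcal Q^\sigma}S_\sigma(\mathbf P_{\!\sigma}),\qquad \lim_{q\to-\infty}\frac{-1}{q}\max_{\sigma\in\mathcal A}\sup_{\mathbf P_{\!\sigma}\in\mathcal Q^\sigma}t^{\boldsymbol\mu}_{q,\sigma}(\mathbf P_{\!\sigma})=\max_{\sigma\in\mathcal A}\sup_{\mathbf P_{\!\sigma}\in\mathcal Q^\sigma}S_\sigma(\mathbf P_{\!\sigma}).$$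
   Context: Setup: $d\ge1$, $\mathcal I=\{1,\dots,N\}$, affine maps $f_i$ with linear parts $\mathrm{diag}(a_i^{(1)},\dots,a_i^{(d)})$, $\lambda_i^{(n)}=|a_i^{(n)}|\in(0,1)$, no two distinct maps agree on $[0,1]^d$. For a permutation $\sigma$, $\Pi_n^\sigma$ = orthogonal projection onto the span of coordinate axes $\sigma_1,\dots,\sigma_n$; $f_i,f_j$ overlap exactly if $\Pi_n^\sigma f_i=\Pi_n^\sigma f_j$ on $[0,1]^d$; $\mathcal I_n^\sigma$ = smallest elements of classes, $\Pi_n^\sigma j$ = smallest element of class of $j$. $\mathcal A$ = set of permutations $\sigma$ for which some $\mathbf i\in\mathcal I^{\mathbb N}$, $\delta>0$ have $L_\delta(\mathbf i,\sigma_d)\le\dots\le L_\delta(\mathbf i,\sigma_1)$ (ties broken by $\sigma_n>\sigma_{n-1}$), $L_\delta(\mathbf i,n)$ the unique integer with $\prod_{\ell\le L_\delta(\mathbf i,n)}\lambda_{i_\ell}^{(n)}\le\delta<\prod_{\ell\le L_\delta(\mathbf i,n)-1}\lambda_{i_\ell}^{(n)}$. Variational: $\mathcal P_n^\sigma$ = probability vectors on $\mathcal I_n^\sigma$, $\mathcal P^\sigma=\mathcal P_d^\sigma\times\dots\times\mathcal P_1^\sigma$, elements $(\mathbf p_{\sigma_d},\dots,\mathbf p_{\sigma_1})$; $H$ Shannon entropy; $\chi_n^\sigma(\mathbf p_{\sigma_m})=-\sum_{i\in\mathcal I_m^\sigma}p_{\sigma_m}(i)\log\lambda_i^{(\sigma_n)}$;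 $C_d^{(d),\sigma}=1/\chi_d^\sigma(\mathbf p_{\sigma_d})$, $C_n^{(d),\sigma}=(1-\sum_{m>n}C_m^{(d),\sigma}\chi_n^\sigma(\mathbf p_{\sigma_m}))/\chi_n^\sigma(\mathbf p_{\sigma_n})$; $\mathcal Q^\sigma=\{\mathbf P_{\!\sigma}:C_n^{(d),\sigma}(\mathbf P_{\!\sigma})\ge0\ \forall n\}$. Measure: $\boldsymbol\mu$ strictly positive probability vector on $\mathcal I$, $\mu_n^\sigma(i)=\sum_{j:\Pi_n^\sigma j=i}\mu(j)$. $\boldsymbol\psi_q^{\boldsymbol\mu}=\{\psi^{\boldsymbol\mu,\sigma}_{q,n}\}$ with $\psi^{\boldsymbol\mu,\sigma}_{q,n}(i)=q\log\mu_n^\sigma(i)$, so $t^{\boldsymbol\mu}_{q,\sigma}(\mathbf P_{\!\sigma})=\sum_nC_n^{(d),\sigma}(\mathbf P_{\!\sigma})\big(H(\mathbf p_{\sigma_n})+q\sum_{i\in\mathcal I_n^\sigma}p_{\sigma_n}(i)\log\mu_n^\sigma(i)\big)$. $S_\sigma(\mathbf P_{\!\sigma})=-\sum_nC_n^{(d),\sigma}(\mathbf P_{\!\sigma})\sum_{i\in\mathcal I_n^\sigma}p_{\sigma_n}(i)\log\mu_n^\sigma(i)$. *)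

From HB Require Import structures.
From mathcomp Require Import all_boot all_order all_algebra all_fingroup.
From mathcomp Require Import all_classical all_reals all_analysis.
Set Implicit Arguments. Unset Strict Implicit. Unset Printing Implicit Defensive.
Import Order.TTheory GRing.Theory Num.Theory.
Local Open Scope ring_scope.

Section IFS.
Context {R : realType} {d N : nat}.
Variables (a b : 'I_N -> 'I_d -> R).

Definition affmap (i : 'I_N) (x : 'I_d -> R) : 'I_d -> R :=
  fun c => a i c * x c + b i c.

Definition inCube (x : 'I_d -> R) : Prop := forall c, 0 <= x c <= 1.

Definition lam (i : 'I_N) (c : 'I_d) : R := `|a i c|.

(* Paper index n (1..d) is encoded by k : 'I_d with k = n-1;
   sigma_n is s k.  Pi_n^sigma = orthogonal projection onto the span of
   the axes s 0, ..., s k, i.e. of the coordinates c with s^-1 c <= k. *)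
Definition projn (s : 'S_d) (k : 'I_d) (x : 'I_d -> R) : 'I_d -> R :=
  fun c => if (nat_of_ord ((s^-1)%g c) <= k)%N then x c else 0.

Definition overlap (s : 'S_d) (k : 'I_d) (i j : 'I_N) : Prop :=
  forall x, inCube x -> projn s k (affmap i x) = projn s k (affmap j x).

(* Pi_n^sigma j : the smallest element of the class of j *)
Definition rep (s : 'S_d) (k : 'I_d) (j : 'I_N) : 'I_N :=
  [arg min_(i < j | `[< overlap s k i j >]) (i : nat)].

Definition Iset (s : 'S_d) (k : 'I_d) : {set 'I_N} :=
  [set i | rep s k i == i].

Definition mun (mu : 'I_N -> R) (s : 'S_d) (k : 'I_d) (i : 'I_N) : R :=
  \sum_(j | rep s k j == i) mu j.

(* probability vector on I (encoded as a vector on 'I_N vanishing off I) *)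
Definition probvec (I : {set 'I_N}) (p : 'I_N -> R) : Prop :=
  (forall i, 0 <= p i) /\ (forall i, i \notin I -> p i = 0) /\
  \sum_(i in I) p i = 1.

(* P k = p_{sigma_{k+1}} in P_{k+1}^sigma *)
Definition PS (s : 'S_d) (P : 'I_d -> 'I_N -> R) : Prop :=
  forall k, probvec (Iset s k) (P k).

Definition chi (s : 'S_d) (P : 'I_d -> 'I_N -> R) (n m : 'I_d) : R :=
  - \sum_(i in Iset s m) P m i * ln (lam i (s n)).

(* The recursion C_n = (1 - sum_{m>n} C_m chi_n(p_m)) / chi_n(p_n)
   (which gives C_d = 1/chi_d(p_d)); iterating it d times from 0
   yields exactly the recursively defined values. *)
Fixpoint Citer (s : 'S_d) (P : 'I_d -> 'I_N -> R) (r : nat) : 'I_d -> R :=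
  match r with
  | 0 => fun _ => 0
  | r'.+1 => fun n =>
      (1 - \sum_(m : 'I_d | (n < m)%N) Citer s P r' m * chi s P n m)
        / chi s P n n
  end.

Definition Ccoef (s : 'S_d) (P : 'I_d -> 'I_N -> R) : 'I_d -> R :=
  Citer s P d.

Definition Qset (s : 'S_d) : set ('I_d -> 'I_N -> R) :=
  [set P | PS s P /\ forall n, 0 <= Ccoef s P n].

Definition entropy (I : {set 'I_N}) (p : 'I_N -> R) : R :=
  - \sum_(i in I) p i * ln (p i).

Definition tq (mu : 'I_N -> R) (q : R) (s : 'S_d) (P : 'I_d -> 'I_N -> R) : R :=
  \sum_(n : 'I_d) Ccoef s P n *
    (entropy (Iset s n) (P n) +
     q * \sum_(i in Iset s n) P n i * ln (mun mu s n i)).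

Definition Sfun (mu : 'I_N -> R) (s : 'S_d) (P : 'I_d -> 'I_N -> R) : R :=
  - \sum_(n : 'I_d) Ccoef s P n *
      \sum_(i in Iset s n) P n i * ln (mun mu s n i).

(* L_delta(w, c) = L : prod_{l <= L} <= delta < prod_{l <= L-1}
   (sequence w indexed from 0) *)
Definition Lrel (delta : R) (w : nat -> 'I_N) (c : 'I_d) (L : nat) : Prop :=
  \prod_(l < L) lam (w l) c <= delta < \prod_(l < L.-1) lam (w l) c.

Definition inA (s : 'S_d) : Prop :=
  exists (w : nat -> 'I_N) (delta : R) (L : 'I_d -> nat),
    0 < delta /\ (forall c, Lrel delta w c (L c)) /\
    (forall n m : 'I_d, nat_of_ord m = n.+1 ->
       (L (s m) <= L (s n))%N /\
       (L (s m) = L (s n) -> (nat_of_ord (s n) < nat_of_ord (s m))%N)).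

Local Open Scope ereal_scope.

Definition Tmax (mu : 'I_N -> R) (q : R) : \bar R :=
  \big[maxe/-oo]_(s : 'S_d | `[< inA s >])
     ereal_sup [set (tq mu q s P)%:E | P in Qset s].

Definition Smin (mu : 'I_N -> R) : \bar R :=
  \big[mine/+oo]_(s : 'S_d | `[< inA s >])
     ereal_inf [set (Sfun mu s P)%:E | P in Qset s].

Definition Smax (mu : 'I_N -> R) : \bar R :=
  \big[maxe/-oo]_(s : 'S_d | `[< inA s >])
     ereal_sup [set (Sfun mu s P)%:E | P in Qset s].

End IFS.

From HB Require Import structures.
From mathcomp Require Import all_boot all_order all_algebra all_fingroup.
From mathcomp Require Import all_classical all_reals all_analysis.
From mathcomp Require Import ring lra.
Import Order.TTheory GRing.Theory Num.Theory.
Local Open Scope classical_set_scope.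
Local Open Scope ring_scope.

(* Write t^mu_{q,sigma}(P) = A_sigma(P) - q S_sigma(P), where
   A_sigma(P) = sum_n C_n(P) H(p_{sigma_n}) gathers the entropy terms.  On
   Q^sigma every coefficient C_n lies in [0, 1/c], c > 0 being the smallest
   exponent -log lambda_i^(k): indeed chi_n(p_n) >= c, and in the recursion
   C_n = (1 - sum_{m>n} C_m chi_n(p_m)) / chi_n(p_n) the numerator is at most
   1 since all C_m and chi-terms are nonnegative.  Entropies are bounded by
   the number of symbols, so |A_sigma(P)| <= K uniformly in sigma and P.
   Multiplying by -1/q turns the max-sup of t into the min-inf (q > 0) or the
   max-sup (q < 0) of S_sigma - A_sigma / q, which lies within K |1/q| of the
   corresponding extremum of S_sigma; a squeeze as |q| -> oo concludes. *)

Section PerturbedExtrema.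
Context {R : realType}.
Local Open Scope ereal_scope.

Lemma ereal_sup_shift (T : Type) (Q : set T) (f g : T -> R) (c : R) :
  (forall x, Q x -> (f x <= g x + c)%R) ->
  ereal_sup [set (f x)%:E | x in Q] <= ereal_sup [set (g x)%:E | x in Q] + c%:E.
Proof.
move=> fg; apply/ereal_supP => _ [x Qx <-].
apply: (@le_trans _ _ ((g x)%:E + c%:E)); first by rewrite -EFinD lee_fin fg.
by rewrite leeD2r //; apply: ereal_sup_ubound; exists x.
Qed.

Lemma ereal_inf_shift (T : Type) (Q : set T) (f g : T -> R) (c : R) :
  (forall x, Q x -> (f x <= g x + c)%R) ->
  ereal_inf [set (f x)%:E | x in Q] <= ereal_inf [set (g x)%:E | x in Q] + c%:E.
Proof.
move=> fg; rewrite -leeBlDr //; apply/ereal_infP => _ [x Qx <-].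
rewrite leeBlDr //; apply: (@le_trans _ _ (f x)%:E).
  by apply: ereal_inf_lbound; exists x.
by rewrite -EFinD lee_fin fg.
Qed.

Lemma bigmaxe_shift (I : finType) (P : pred I) (X Y : I -> \bar R) (c : R) :
  (forall i, P i -> X i <= Y i + c%:E) ->
  \big[maxe/-oo]_(i | P i) X i <= \big[maxe/-oo]_(i | P i) Y i + c%:E.
Proof.
move=> XY; elim/big_rec2: _ => [//|i x y Pi xy].
rewrite ge_max; apply/andP; split.
  by apply: (le_trans (XY i Pi)); apply: leeD2r; rewrite le_max lexx.
by apply: (le_trans xy); apply: leeD2r; rewrite le_max lexx orbT.
Qed.

Lemma bigmine_shift (I : finType) (P : pred I) (X Y : I -> \bar R) (c : R) :
  (forall i, P i -> X i <= Y i + c%:E) ->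
  \big[mine/+oo]_(i | P i) X i <= \big[mine/+oo]_(i | P i) Y i + c%:E.
Proof.
move=> XY; elim/big_rec2: _ => [|i x y Pi xy]; first by rewrite leey.
rewrite -leeBlDr // le_min; apply/andP; split; rewrite leeBlDr //.
  by apply: (le_trans _ (XY i Pi)); rewrite ge_min lexx.
by apply: (le_trans _ xy); rewrite ge_min lexx orbT.
Qed.

Lemma cvge_squeeze_shift (F : set_system R) (FF : ProperFilter F)
    (G : R -> \bar R) (c : R -> R) (L : \bar R) :
  c x @[x --> F] --> 0%R ->
  (\forall x \near F, G x <= L + (c x)%:E /\ L <= G x + (c x)%:E) ->
  G x @[x --> F] --> L.
Proof.
move=> c0 G_near.
have cE : (c x)%:E @[x --> F] --> 0%:E by apply/fine_cvgP; split; [near=> x|].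
have cNE : (- c x)%:E @[x --> F] --> 0%:E.
  by apply/fine_cvgP; split; [near=> x | rewrite -oppr0; apply: cvgN].
apply: (@squeeze_cvge _ _ _ _ (fun x => L + (- c x)%:E) G
   (fun x => L + (c x)%:E)).
- near=> x; have [GL LG] : G x <= L + (c x)%:E /\ L <= G x + (c x)%:E
    by near: x.
  by rewrite GL andbT EFinN -leeBlDr // in LG *.
- rewrite -[X in _ --> X]adde0; apply: cvgeD => //; last exact: cvg_cst.
  by rewrite fin_num_adde_defl.
- rewrite -[X in _ --> X]adde0; apply: cvgeD => //; last exact: cvg_cst.
  by rewrite fin_num_adde_defl.
Unshelve. all: end_near. Qed.

End PerturbedExtrema.

Lemma inv_cvg_pinfty (R : realType) : ((q : R)^-1) @[q --> +oo] --> 0.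
Proof.
have q_gt0 : \forall q \near +oo, 0 < (q : R) by apply: nbhs_pinfty_gt; rewrite real0.
exact: (proj2 (@gtr0_cvgV0 R R _ _ id q_gt0) cvg_id).
Qed.

Lemma inv_cvg_ninfty (R : realType) : ((q : R)^-1) @[q --> -oo] --> 0.
Proof.
have q_lt0 : \forall q \near -oo, (q : R) < 0 by apply: nbhs_ninfty_lt; rewrite real0.
exact: (proj2 (@ltr0_cvgV0 R R _ _ id q_lt0) cvg_id).
Qed.

Lemma error_cvg0 {R : realType} {F : set_system R} {FF : ProperFilter F} {K : R} :
  (q^-1) @[q --> F] --> 0 -> K * `|q^-1| @[q --> F] --> 0.
Proof.
move=> inv0; have := cvgM (@cvg_cst R^o K R F _) (cvg_norm inv0).
by rewrite normr0 mulr0; apply.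
Qed.

(* 0 <= p <= 1 forces |p log p| <= 1 (since -log p <= 1/p). *)
Lemma plnp_bound (R : realType) (p : R) : 0 <= p <= 1 -> `|p * ln p| <= 1.
Proof.
move=> /andP[p_ge0 p_le1]; have [->|p_neq0] := eqVneq p 0.
  by rewrite mul0r normr0.
have p_gt0 : 0 < p by rewrite lt0r p_neq0.
rewrite ler0_norm; last by rewrite mulr_ge0_le0 // ln_le0.
have := @ln_sublinear _ p^-1; rewrite invr_gt0 p_gt0 lnV ?posrE // => /(_ isT).
by rewrite -mulrN => ln_lt; apply: ltW; rewrite -(mulfV p_neq0) ltr_pM2l.
Qed.

Section Coefficients.
Context {R : realType} {d N : nat} (a b : 'I_N -> 'I_d -> R).
Hypothesis lam_bounds : forall i c, 0 < `|a i c| < 1.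

Definition lnlam_min : R :=
  \big[Order.min/1]_(ic : 'I_N * 'I_d) (- ln (lam a ic.1 ic.2)).

Lemma lnlam_min_gt0 : 0 < lnlam_min.
Proof.
apply: lt_bigmin => // -[i c] _ /=; rewrite oppr_gt0; apply: ln_lt0.
exact: lam_bounds.
Qed.

Lemma lnlam_min_le i c : lnlam_min <= - ln (lam a i c).
Proof. exact: (bigmin_le _ (i, c)). Qed.

Lemma chi_ge0 s P n m : PS a b s P -> 0 <= chi a b s P n m.
Proof.
move=> PS_P; rewrite /chi -sumrN; apply: sumr_ge0 => i _.
rewrite -mulrN mulr_ge0 //; first by case: (PS_P m).
by rewrite oppr_ge0 ln_le0 // ltW //; case/andP: (lam_bounds i (s n)).
Qed.

Lemma chi_diag_ge s P n : PS a b s P -> lnlam_min <= chi a b s P n n.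
Proof.
move=> PS_P; case: (PS_P n) => p_ge0 [_ p_sum1].
rewrite /chi -sumrN -[lnlam_min]mul1r -p_sum1 mulr_suml; apply: ler_sum => i _.
by rewrite -mulrN ler_wpM2l // lnlam_min_le.
Qed.

(* Citer r n no longer changes once r + n >= d: each C_n only depends on
   the C_m with m > n, so d iterations reach the recursively defined values. *)
Lemma Citer_stable s P r (n : 'I_d) : (d <= r + n)%N ->
  Citer a b s P r.+1 n = Citer a b s P r n.
Proof.
elim: r n => [|r IH] n d_le.
  by move: (ltn_ord n); rewrite add0n in d_le; rewrite ltnNge d_le.
rewrite [LHS]/= [RHS]/=; congr ((1 - _) / _); apply: eq_bigr => m n_lt_m.
congr (_ * _); rewrite -/(Citer a b s P r.+1 m) IH //.
by apply: leq_trans d_le _; rewrite addSn -addnS leq_add2l.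
Qed.

Lemma Ccoef_rec s P (n : 'I_d) :
  Ccoef a b s P n =
  (1 - \sum_(m : 'I_d | (n < m)%N) Ccoef a b s P m * chi a b s P n m)
    / chi a b s P n n.
Proof.
have d_gt0 : (0 < d)%N := leq_ltn_trans (leq0n n) (ltn_ord n).
transitivity (Citer a b s P d.-1.+1 n); first by rewrite /Ccoef prednK.
congr ((1 - _) / _); apply: eq_bigr => m n_lt_m; congr (_ * _).
have m_big : (d <= d.-1 + m)%N.
  by rewrite -{1}(prednK d_gt0) -addn1 leq_add2l (leq_ltn_trans _ n_lt_m).
by rewrite -/(Citer a b s P d.-1 m) -(Citer_stable _ _ _ _ m_big) /Ccoef prednK.
Qed.

Lemma Ccoef_bound s P n : Qset a b s P -> 0 <= Ccoef a b s P n <= lnlam_min^-1.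
Proof.
move=> [PS_P C_ge0]; rewrite C_ge0 /=.
have chi_big := chi_diag_ge _ _ n PS_P.
have chi_pos : 0 < chi a b s P n n := lt_le_trans lnlam_min_gt0 chi_big.
have num_le1 :
    1 - \sum_(m : 'I_d | (n < m)%N) Ccoef a b s P m * chi a b s P n m <= 1.
  by rewrite gerBl sumr_ge0 // => m _; rewrite mulr_ge0 ?chi_ge0.
rewrite Ccoef_rec ler_pdivrMr // (le_trans num_le1) //.
rewrite -[1](mulVf (lt0r_neq0 lnlam_min_gt0)) ler_wpM2l //.
by rewrite invr_ge0 ltW // lnlam_min_gt0.
Qed.

End Coefficients.

Lemma probvec_le1 {R : realType} {N : nat} {I : {set 'I_N}} {p : 'I_N -> R} {i} :
  probvec I p -> i \in I -> p i <= 1.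
Proof.
move=> [p_ge0 [_ p_sum1]] iI; rewrite -p_sum1 (bigD1 i) //= lerDl.
by apply: sumr_ge0 => j _; exact: p_ge0.
Qed.

Lemma entropy_bound {R : realType} {N : nat} {I : {set 'I_N}} {p : 'I_N -> R} :
  probvec I p -> `|entropy I p| <= #|I|%:R.
Proof.
move=> pI; rewrite /entropy normrN (le_trans (ler_norm_sum _ _ _)) //.
rewrite -sum1_card natr_sum ler_sum // => i iI; apply: plnp_bound.
by rewrite (probvec_le1 pI iI) andbT; case: pI.
Qed.

Section EntropyPart.
Context {R : realType} {d N : nat} (a b : 'I_N -> 'I_d -> R).
Hypothesis lam_bounds : forall i c, 0 < `|a i c| < 1.

Definition entropy_part (s : 'S_d) (P : 'I_d -> 'I_N -> R) : R :=
  \sum_(n : 'I_d) Ccoef a b s P n * entropy (Iset a b s n) (P n).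

Lemma tq_split mu q s P :
  tq a b mu q s P = entropy_part s P - q * Sfun a b mu s P.
Proof.
rewrite /tq /entropy_part /Sfun mulrN opprK mulr_sumr -big_split /=.
by apply: eq_bigr => n _; rewrite mulrDr mulrCA.
Qed.

Definition entropy_bound_const : R := d%:R * ((lnlam_min a)^-1 * N%:R).

Lemma entropy_part_bound s P :
  Qset a b s P -> `|entropy_part s P| <= entropy_bound_const.
Proof.
move=> QP; rewrite /entropy_part (le_trans (ler_norm_sum _ _ _)) //.
rewrite /entropy_bound_const -[d in d%:R]card_ord -sumr_const mulr_suml.
apply: ler_sum => n _; rewrite mul1r.
have /andP[C_ge0 C_le] := Ccoef_bound a b lam_bounds s P n QP.
rewrite normrM ger0_norm //; apply: ler_pM => //.
have [PS_P _] := QP; apply: (le_trans (entropy_bound (PS_P n))).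
by rewrite ler_nat -[leqRHS]card_ord max_card.
Qed.

Lemma perturbed_Sfun_close mu q s P : Qset a b s P ->
  let err := entropy_bound_const * `|q^-1| in
  Sfun a b mu s P - entropy_part s P / q <= Sfun a b mu s P + err /\
  Sfun a b mu s P <= Sfun a b mu s P - entropy_part s P / q + err.
Proof.
move=> QP err; have : `|entropy_part s P / q| <= err.
  by rewrite normrM ler_wpM2r // entropy_part_bound.
by rewrite ler_norml => /andP[lo hi]; split; lra.
Qed.

Local Open Scope ereal_scope.

Lemma scaled_Tmax_pos mu q : (0 < q)%R -> (- q^-1)%:E * Tmax a b mu q =
  \big[mine/+oo]_(s : 'S_d | `[< inA a s >])
     ereal_inf [set (Sfun a b mu s P - entropy_part s P / q)%:E | P in Qset a b s].
Proof.
move=> q_gt0; have qV_gt0 : (0 < q^-1)%R by rewrite invr_gt0.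
rewrite /Tmax (big_morph (fun x => (- q^-1)%:E * x) (id1:=+oo) (op1:=mine)).
- apply: eq_bigr => s _.
  rewrite EFinN mulNe -ereal_sup_pZl // -ereal_infN !image_comp.
  congr ereal_inf; apply: eq_imagel => P _ /=; rewrite tq_split; congr (_%:E).
  by field; rewrite gt_eqF.
- by move=> x y; rewrite EFinN !mulNe maxe_pMr ?oppe_max // lee_fin ltW.
- by rewrite lt0_muleNy // lte_fin oppr_lt0.
Qed.

Lemma scaled_Tmax_neg mu q : (q < 0)%R -> (- q^-1)%:E * Tmax a b mu q =
  \big[maxe/-oo]_(s : 'S_d | `[< inA a s >])
     ereal_sup [set (Sfun a b mu s P - entropy_part s P / q)%:E | P in Qset a b s].
Proof.
move=> q_lt0; have NqV_gt0 : (0 < - q^-1)%R by rewrite oppr_gt0 invr_lt0.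
rewrite /Tmax (big_morph (fun x => (- q^-1)%:E * x) (id1:=-oo) (op1:=maxe)).
- apply: eq_bigr => s _.
  rewrite -ereal_sup_pZl // !image_comp.
  congr ereal_sup; apply: eq_imagel => P _ /=; rewrite -EFinM tq_split.
  by congr (_%:E); field; rewrite lt_eqF.
- by move=> x y; rewrite maxe_pMr // lee_fin ltW.
- by rewrite gt0_muleNy // lte_fin.
Qed.

Lemma scaled_Tmax_cvg_pinfty mu :
  ((- q^-1)%:E * Tmax a b mu q)%E @[q --> +oo%R] --> Smin a b mu.
Proof.
apply: (@cvge_squeeze_shift _ _ _ _ (fun q => entropy_bound_const * `|q^-1|)%R).
  exact: error_cvg0 (inv_cvg_pinfty R).
near=> q; have q_gt0 : (0 < q)%R by near: q; apply: nbhs_pinfty_gt; rewrite real0.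
rewrite scaled_Tmax_pos //; split; apply: bigmine_shift => s _;
  apply: ereal_inf_shift => P QP; by have [] := perturbed_Sfun_close mu q s P QP.
Unshelve. all: end_near. Qed.

Lemma scaled_Tmax_cvg_ninfty mu :
  ((- q^-1)%:E * Tmax a b mu q)%E @[q --> -oo%R] --> Smax a b mu.
Proof.
apply: (@cvge_squeeze_shift _ _ _ _ (fun q => entropy_bound_const * `|q^-1|)%R).
  exact: error_cvg0 (inv_cvg_ninfty R).
near=> q; have q_lt0 : (q < 0)%R by near: q; apply: nbhs_ninfty_lt; rewrite real0.
rewrite scaled_Tmax_neg //; split; apply: bigmaxe_shift => s _;
  apply: ereal_sup_shift => P QP; by have [] := perturbed_Sfun_close mu q s P QP.
Unshelve. all: end_near. Qed.

End EntropyPart.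

Theorem lemma8p2 (R : realType) (d N : nat)
    (a b : 'I_N -> 'I_d -> R) (mu : 'I_N -> R) :
  (0 < d)%N ->
  (forall i c, 0 < `|a i c| < 1) ->
  (forall i j : 'I_N, i != j ->
     ~ (forall x, inCube x -> affmap a b i x = affmap a b j x)) ->
  (forall i, 0 < mu i) -> \sum_i mu i = 1 ->
  (((- q^-1)%:E * Tmax a b mu q)%E @[q --> +oo] --> Smin a b mu) /\
  (((- q^-1)%:E * Tmax a b mu q)%E @[q --> -oo] --> Smax a b mu).
Proof.
move=> _ lam_bounds _ _ _.
by split; [exact: scaled_Tmax_cvg_pinfty | exact: scaled_Tmax_cvg_ninfty].
Qed.
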